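(* Let $f_\theta(t)=\frac{\pi}{4}-\bigl(\frac{\pi}{4}-\theta_0\bigr)\cos\bigl(\frac{2\pi}{T}t\bigr)$ and $f_r(t)=\frac{\pi}{2}+\bigl(\frac{\pi}{2}-r_0\bigr)\sin\bigl(\frac{2\pi}{T}t\bigr)$. Then: (i) $\theta$ and $f_\theta$ have the same symmetries (both are $T$-periodic, even, symmetric about $t=T/2$, and point-symmetric about $(T/4,\pi/4)$ and $(3T/4,\pi/4)$) and the same critical points, and $\theta'(t)>0$ iff $f_\theta'(t)>0$; (ii) $r$ and $f_r$ have the same symmetries (both are $T$-periodic, symmetric about $t=T/4$ and $t=3T/4$, and point-symmetric about $(0,\pi/2)$ and $(T/2,\pi/2)$) and the same critical points, and $r'(t)>0$ iff $f_r'(t)>0$; (iii) $\cos\alpha(t)$ and $\cos\bigl(\frac{2\pi}{T}t\bigr)$ have the same symmetries and the same critical points and are strictly increasing, respectively strictly decreasing, on the same intervals; (iv) $\sin\alpha(t)$ and $\sin\bigl(\frac{2\pi}{T}t\bigr)$ have the same symmetries and the same critical points and are strictly increasing, respectively strictly decreasing, on the same intervals.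
   Context: Fix an integer $n>1$. Consider the system $r'=\cos\alpha$, $\theta'=\sin\alpha/\sin r$, $\alpha'=(2n-2)\csc r\,\cos\alpha\,\cot(2\theta)-(2n-1)\cot r\,\sin\alpha$. By Carlotto–Schulz, there exist $T>0$ and $r_0\in(0,\pi)$ such that the solution with $\theta(0)=\pi/4$, $r(0)=r_0$, $\alpha(0)=-\pi/2$ satisfies $\theta(T/4)>0$, $r(T/4)=\pi/2$, $\alpha(T/4)=0$, and on $[0,T/4]$ the function $\theta$ is strictly decreasing while $r$ and $\alpha$ are strictly increasing. Moreover (Carlotto–Schulz symmetries) the graph of $\theta$ is symmetric about $t=T/4$ and $t=3T/4$ and point-symmetric about $(T/2,\pi/4)$ and $(0,\pi/4)$; the graph of $r$ is symmetric about $t=0$ and $t=T/2$ and point-symmetric about $(T/4,\pi/2)$ and $(3T/4,\pi/2)$; $\theta,r$ are $T$-periodic and $\alpha(t+T)=\alpha(t)+2\pi$. Now translate this solution by $T/4$ in time (i.e. replace $t$ by $t+T/4$), so that $r(0)=\pi/2$, $\alpha(0)=0$, and $\theta_0:=\theta(0)$ is the minimum of $\theta$, with $0<\theta_0<\pi/4$; then $r_0=r(-T/4)$. All statements refer to this translated solution $(r,\theta,\alpha)$. *)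

From Stdlib Require Import Reals Lra.
From Coquelicot Require Import Coquelicot.
Open Scope R_scope.

Definition cot (x : R) : R := cos x / sin x.

Definition periodic (f : R -> R) (T : R) : Prop := forall t, f (t + T) = f t.
Definition sym_about (f : R -> R) (a : R) : Prop := forall t, f (a + t) = f (a - t).
Definition psym_about (f : R -> R) (a c : R) : Prop :=
  forall t, f (a + t) + f (a - t) = 2 * c.

Definition strictly_incr_on (f : R -> R) (a b : R) : Prop :=
  forall x y, a <= x -> x < y -> y <= b -> f x < f y.
Definition strictly_decr_on (f : R -> R) (a b : R) : Prop :=
  forall x y, a <= x -> x < y -> y <= b -> f y < f x.

Definition solves_system (n : nat) (r th al : R -> R) : Prop :=
  forall t,
    is_derive r t (cos (al t)) /\
    is_derive th t (sin (al t) / sin (r t)) /\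
    is_derive al t
      ((2 * INR n - 2) * / sin (r t) * cos (al t) * cot (2 * th t)
       - (2 * INR n - 1) * cot (r t) * sin (al t)).

Definition theta_syms (f : R -> R) (T : R) : Prop :=
  periodic f T /\ sym_about f 0 /\ sym_about f (T / 2) /\
  psym_about f (T / 4) (PI / 4) /\ psym_about f (3 * T / 4) (PI / 4).
Definition r_syms (f : R -> R) (T : R) : Prop :=
  periodic f T /\ sym_about f (T / 4) /\ sym_about f (3 * T / 4) /\
  psym_about f 0 (PI / 2) /\ psym_about f (T / 2) (PI / 2).
Definition cos_syms (f : R -> R) (T : R) : Prop :=
  periodic f T /\ sym_about f 0 /\ sym_about f (T / 2) /\
  psym_about f (T / 4) 0 /\ psym_about f (3 * T / 4) 0.
Definition sin_syms (f : R -> R) (T : R) : Prop :=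
  periodic f T /\ sym_about f (T / 4) /\ sym_about f (3 * T / 4) /\
  psym_about f 0 0 /\ psym_about f (T / 2) 0.

Definition same_critical_points (f g : R -> R) : Prop :=
  forall t, Derive f t = 0 <-> Derive g t = 0.

Definition same_monotonicity (f g : R -> R) : Prop :=
  forall a b, a < b ->
    (strictly_incr_on f a b <-> strictly_incr_on g a b) /\
    (strictly_decr_on f a b <-> strictly_decr_on g a b).

From Stdlib Require Import Reals Lra Lia.
From Coquelicot Require Import Coquelicot.
Open Scope R_scope.

(* The symmetries of [r] and [theta] pass to their derivatives, hence to
   [cos alpha = r'] and [sin alpha = theta' sin r]. Through the ODE they make
   [alpha'] symmetric about [0] and [T/4], so its positivity on [[0, T/4]]
   spreads to all of R and [alpha] gains exactly [pi] over every half period.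
   Hence [alpha (t + T/4)] and the linear phase [2 pi t / T] are both strictly
   increasing and equal to [k pi/2] at [t = k T/4]. For two such phases the
   signs of [cos] and [sin], and the intervals on which they are monotone, are
   determined by the position of [t] relative to this grid, which yields every
   claimed equivalence. *)

(** * Symmetries of real functions *)

Lemma translate_Z_additive (f : R -> R) (p q : R) :
  (forall t, f (t + p) = f t + q) ->
  forall (k : Z) t, f (t + IZR k * p) = f t + IZR k * q.
Proof.
  intros Hf k. induction k as [|k IHk|k IHk] using Z.peano_ind; intros t.
  - rewrite Rmult_0_l, Rplus_0_r. ring.
  - rewrite succ_IZR.
    replace (t + (IZR k + 1) * p) with (t + IZR k * p + p) by ring.
    rewrite Hf, IHk. ring.
  - replace (Z.pred k) with (k - 1)%Z by lia. rewrite minus_IZR.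
    pose proof (Hf (t + (IZR k - 1) * p)) as E.
    replace (t + (IZR k - 1) * p + p) with (t + IZR k * p) in E by ring.
    rewrite IHk in E. lra.
Qed.

Lemma translate_Z_periodic (f : R -> R) (p : R) :
  periodic f p -> forall (k : Z) t, f (t + IZR k * p) = f t.
Proof.
  intros Hf k t.
  rewrite (translate_Z_additive f p 0); [ring|].
  intro u. rewrite Hf. ring.
Qed.

Lemma exists_translate_into_period (p t : R) :
  0 < p -> exists k : Z, 0 <= t + IZR k * p < p.
Proof.
  intros Hp. destruct (base_Int_part (t / p)) as [Hlo Hhi].
  exists (- Int_part (t / p))%Z. rewrite opp_IZR.
  set (m := IZR (Int_part (t / p))) in *.
  replace t with (t / p * p) by (field; lra).
  split; nra.
Qed.

Lemma periodic_cos : periodic cos (2 * PI).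
Proof. intro t. rewrite cos_plus, cos_2PI, sin_2PI. ring. Qed.

Lemma periodic_sin : periodic sin (2 * PI).
Proof. intro t. rewrite sin_plus, cos_2PI, sin_2PI. ring. Qed.

Lemma is_derive_shift (f : R -> R) (c t l : R) :
  is_derive f (t + c) l -> is_derive (fun u => f (u + c)) t l.
Proof.
  intros Hf. rewrite <- (Rmult_1_l l).
  apply (is_derive_comp f (fun u => u + c)); [exact Hf | auto_derive; auto; ring].
Qed.

Lemma is_derive_reflect (f : R -> R) (b t l : R) :
  is_derive f (b - t) l -> is_derive (fun u => f (b - u)) t (- l).
Proof.
  intros Hf. replace (- l) with (-1 * l) by ring.
  apply (is_derive_comp f (fun u => b - u)); [exact Hf | auto_derive; auto; ring].
Qed.

Lemma reflect_of_sym_about (f : R -> R) (a : R) :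
  sym_about f a -> forall u, f (2 * a - u) = f u.
Proof.
  intros Hf u. pose proof (Hf (u - a)) as E.
  replace (a + (u - a)) with u in E by ring.
  replace (a - (u - a)) with (2 * a - u) in E by ring. auto.
Qed.

Lemma reflect_of_psym_about (f : R -> R) (a c : R) :
  psym_about f a c -> forall u, f u = 2 * c - f (2 * a - u).
Proof.
  intros Hf u. pose proof (Hf (u - a)) as E.
  replace (a + (u - a)) with u in E by ring.
  replace (a - (u - a)) with (2 * a - u) in E by ring. lra.
Qed.

Lemma psym_about_derive_of_sym_about (f df : R -> R) (a : R) :
  (forall t, is_derive f t (df t)) -> sym_about f a -> psym_about df a 0.
Proof.
  intros Hd Hf t.
  assert (Hrefl : is_derive f (a + t) (- df (a - t))).
  { apply (is_derive_ext (fun u => f (2 * a - u))).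
    - exact (reflect_of_sym_about f a Hf).
    - apply is_derive_reflect. replace (2 * a - (a + t)) with (a - t) by ring. apply Hd. }
  rewrite <- (is_derive_unique _ _ _ (Hd (a + t))), (is_derive_unique _ _ _ Hrefl). ring.
Qed.

Lemma sym_about_derive_of_psym_about (f df : R -> R) (a c : R) :
  (forall t, is_derive f t (df t)) -> psym_about f a c -> sym_about df a.
Proof.
  intros Hd Hf t.
  assert (Hrefl : is_derive f (a + t) (0 - - df (a - t))).
  { apply (is_derive_ext (fun u => 2 * c - f (2 * a - u))).
    - intro u. symmetry. exact (reflect_of_psym_about f a c Hf u).
    - apply (is_derive_minus (fun _ => 2 * c)); [auto_derive; auto|].
      apply is_derive_reflect. replace (2 * a - (a + t)) with (a - t) by ring. apply Hd. }
  rewrite <- (is_derive_unique _ _ _ (Hd (a + t))), (is_derive_unique _ _ _ Hrefl). ring.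
Qed.

Lemma periodic_shift (f : R -> R) (s T : R) :
  periodic f T -> periodic (fun t => f (t + s)) T.
Proof. intros Hf t. replace (t + T + s) with (t + s + T) by ring. apply Hf. Qed.

Lemma sym_about_shift (f : R -> R) (s a b : R) :
  b = a + s -> sym_about f b -> sym_about (fun t => f (t + s)) a.
Proof.
  intros -> Hf t. replace (a + t + s) with (a + s + t) by ring.
  replace (a - t + s) with (a + s - t) by ring. apply Hf.
Qed.

Lemma psym_about_shift (f : R -> R) (s a b c : R) :
  b = a + s -> psym_about f b c -> psym_about (fun t => f (t + s)) a c.
Proof.
  intros -> Hf t. replace (a + t + s) with (a + s + t) by ring.
  replace (a - t + s) with (a + s - t) by ring. apply Hf.
Qed.

Lemma sym_about_add_period (f : R -> R) (T a : R) :
  periodic f T -> sym_about f a -> sym_about f (a + T).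
Proof.
  intros HT Hf t. replace (a + T + t) with (a + t + T) by ring.
  replace (a + T - t) with (a - t + T) by ring. rewrite !HT. apply Hf.
Qed.

Lemma psym_about_add_period (f : R -> R) (T a c : R) :
  periodic f T -> psym_about f a c -> psym_about f (a + T) c.
Proof.
  intros HT Hf t. replace (a + T + t) with (a + t + T) by ring.
  replace (a + T - t) with (a - t + T) by ring. rewrite !HT. apply Hf.
Qed.

Lemma periodic_scale (g : R -> R) (w T P : R) :
  P = w * T -> periodic g P -> periodic (fun t => g (w * t)) T.
Proof. intros -> Hg t. replace (w * (t + T)) with (w * t + w * T) by ring. apply Hg. Qed.

Lemma sym_about_scale (g : R -> R) (w a b : R) :
  b = w * a -> sym_about g b -> sym_about (fun t => g (w * t)) a.
Proof.
  intros -> Hg t. replace (w * (a + t)) with (w * a + w * t) by ring.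
  replace (w * (a - t)) with (w * a - w * t) by ring. apply Hg.
Qed.

Lemma psym_about_scale (g : R -> R) (w a b c : R) :
  b = w * a -> psym_about g b c -> psym_about (fun t => g (w * t)) a c.
Proof.
  intros -> Hg t. replace (w * (a + t)) with (w * a + w * t) by ring.
  replace (w * (a - t)) with (w * a - w * t) by ring. apply Hg.
Qed.

Section Affine.
Variables (f g : R -> R) (c k : R).
Hypothesis Hfg : forall t, f t = c + k * g t.

Lemma periodic_affine T : periodic g T -> periodic f T.
Proof. intros Hg t. rewrite !Hfg, Hg. reflexivity. Qed.

Lemma sym_about_affine a : sym_about g a -> sym_about f a.
Proof. intros Hg t. rewrite !Hfg, Hg. reflexivity. Qed.

Lemma psym_about_affine a : psym_about g a 0 -> psym_about f a c.
Proof. intros Hg t. rewrite !Hfg. pose proof (Hg t). nra. Qed.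
End Affine.

Lemma sym_about_ext (f g : R -> R) (a : R) :
  (forall t, f t = g t) -> sym_about f a -> sym_about g a.
Proof. intros E Hf t. rewrite <- !E. apply Hf. Qed.

Lemma psym_about_ext (f g : R -> R) (a c : R) :
  (forall t, f t = g t) -> psym_about f a c -> psym_about g a c.
Proof. intros E Hf t. rewrite <- !E. apply Hf. Qed.

Lemma sym_about_comp (f g : R -> R) (a : R) :
  sym_about f a -> sym_about (fun t => g (f t)) a.
Proof. intros Hf t. rewrite Hf. reflexivity. Qed.

Lemma sym_about_sin_of_psym_about (f : R -> R) (a : R) :
  psym_about f a (PI / 2) -> sym_about (fun t => sin (f t)) a.
Proof.
  intros Hf t. replace (f (a + t)) with (PI - f (a - t)) by (pose proof (Hf t); lra).
  apply sin_PI_x.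
Qed.

Lemma sym_about_sq_dev_of_psym_about (f : R -> R) (a c : R) :
  psym_about f a c -> sym_about (fun t => (f t - c) ^ 2) a.
Proof.
  intros Hf t. replace (f (a + t)) with (2 * c - f (a - t)) by (pose proof (Hf t); lra).
  ring.
Qed.

Lemma sym_about_mul (f g : R -> R) (a : R) :
  sym_about f a -> sym_about g a -> sym_about (fun t => f t * g t) a.
Proof. intros Hf Hg t. rewrite Hf, Hg. reflexivity. Qed.

Lemma psym_about_mul (f g : R -> R) (a : R) :
  psym_about f a 0 -> sym_about g a -> psym_about (fun t => f t * g t) a 0.
Proof.
  intros Hf Hg t. rewrite Hg. replace (f (a + t)) with (- f (a - t)) by (pose proof (Hf t); lra).
  ring.
Qed.

Lemma periodic_of_sym_about (f : R -> R) (a b : R) :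
  sym_about f a -> sym_about f b -> periodic f (2 * (b - a)).
Proof.
  intros Ha Hb t.
  rewrite <- (reflect_of_sym_about f a Ha t), <- (reflect_of_sym_about f b Hb).
  f_equal. ring.
Qed.

Lemma forall_of_sym_about (P : R -> Prop) (f : R -> R) (p : R) :
  0 < p -> sym_about f 0 -> sym_about f p ->
  (forall s, 0 <= s <= p -> P (f s)) -> forall t, P (f t).
Proof.
  intros Hp H0 Hsp HP t.
  destruct (exists_translate_into_period (2 * (p - 0)) t) as [k Hk]; [lra|].
  rewrite <- (translate_Z_periodic f _ (periodic_of_sym_about f 0 p H0 Hsp) k t).
  set (s := t + IZR k * (2 * (p - 0))) in *.
  destruct (Rle_or_lt s p) as [Hs|Hs]; [apply HP; lra|].
  rewrite <- (reflect_of_sym_about f p Hsp). apply HP. lra.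
Qed.

Lemma cos_sym_about_0 : sym_about cos 0.
Proof. intro t. rewrite Rplus_0_l, Rminus_0_l, cos_neg. reflexivity. Qed.

Lemma cos_sym_about_PI : sym_about cos PI.
Proof. intro t. rewrite cos_plus, cos_minus, sin_PI. ring. Qed.

Lemma cos_psym_about_PI2 : psym_about cos (PI / 2) 0.
Proof. intro t. rewrite cos_plus, cos_minus, cos_PI2, sin_PI2. ring. Qed.

Lemma cos_psym_about_3PI2 : psym_about cos (3 * (PI / 2)) 0.
Proof.
  intro t. replace (3 * (PI / 2)) with (PI + PI / 2) by lra.
  rewrite cos_minus, !cos_plus, !sin_plus, cos_PI, sin_PI, cos_PI2, sin_PI2. ring.
Qed.

Lemma sin_sym_about_PI2 : sym_about sin (PI / 2).
Proof. intro t. rewrite sin_plus, sin_minus, cos_PI2, sin_PI2. ring. Qed.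

Lemma sin_sym_about_3PI2 : sym_about sin (3 * (PI / 2)).
Proof.
  intro t. replace (3 * (PI / 2)) with (PI + PI / 2) by lra.
  rewrite sin_minus, !sin_plus, !cos_plus, cos_PI, sin_PI, cos_PI2, sin_PI2. ring.
Qed.

Lemma sin_psym_about_0 : psym_about sin 0 0.
Proof. intro t. rewrite Rplus_0_l, Rminus_0_l, sin_neg. ring. Qed.

Lemma sin_psym_about_PI : psym_about sin PI 0.
Proof. intro t. rewrite sin_plus, sin_minus, sin_PI. ring. Qed.

Lemma cos_syms_scaled (T : R) : 0 < T -> cos_syms (fun t => cos (2 * PI / T * t)) T.
Proof.
  intros HT. repeat split.
  - apply (periodic_scale _ _ _ (2 * PI)); [field; lra | exact periodic_cos].
  - apply (sym_about_scale _ _ _ 0); [ring | exact cos_sym_about_0].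
  - apply (sym_about_scale _ _ _ PI); [field; lra | exact cos_sym_about_PI].
  - apply (psym_about_scale _ _ _ (PI / 2)); [field; lra | exact cos_psym_about_PI2].
  - apply (psym_about_scale _ _ _ (3 * (PI / 2))); [field; lra | exact cos_psym_about_3PI2].
Qed.

Lemma sin_syms_scaled (T : R) : 0 < T -> sin_syms (fun t => sin (2 * PI / T * t)) T.
Proof.
  intros HT. repeat split.
  - apply (periodic_scale _ _ _ (2 * PI)); [field; lra | exact periodic_sin].
  - apply (sym_about_scale _ _ _ (PI / 2)); [field; lra | exact sin_sym_about_PI2].
  - apply (sym_about_scale _ _ _ (3 * (PI / 2))); [field; lra | exact sin_sym_about_3PI2].
  - apply (psym_about_scale _ _ _ 0); [ring | exact sin_psym_about_0].
  - apply (psym_about_scale _ _ _ PI); [field; lra | exact sin_psym_about_PI].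
Qed.

Lemma theta_syms_of_cos_syms (f g : R -> R) (T k : R) :
  (forall t, f t = PI / 4 + k * g t) -> cos_syms g T -> theta_syms f T.
Proof.
  intros Hfg (Hper & H0 & H2 & H1 & H3). repeat split.
  - exact (periodic_affine f g _ _ Hfg T Hper).
  - exact (sym_about_affine f g _ _ Hfg 0 H0).
  - exact (sym_about_affine f g _ _ Hfg _ H2).
  - exact (psym_about_affine f g _ _ Hfg _ H1).
  - exact (psym_about_affine f g _ _ Hfg _ H3).
Qed.

Lemma r_syms_of_sin_syms (f g : R -> R) (T k : R) :
  (forall t, f t = PI / 2 + k * g t) -> sin_syms g T -> r_syms f T.
Proof.
  intros Hfg (Hper & H1 & H3 & H0 & H2). repeat split.
  - exact (periodic_affine f g _ _ Hfg T Hper).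
  - exact (sym_about_affine f g _ _ Hfg _ H1).
  - exact (sym_about_affine f g _ _ Hfg _ H3).
  - exact (psym_about_affine f g _ _ Hfg 0 H0).
  - exact (psym_about_affine f g _ _ Hfg _ H2).
Qed.

Lemma strictly_incr_on_bounds (f : R -> R) (a b s : R) :
  strictly_incr_on f a b -> a <= s <= b -> f a <= f s <= f b.
Proof.
  intros Hf [Ha Hb]. split.
  - destruct Ha as [Ha | <-]; [left; apply Hf|]; lra.
  - destruct Hb as [Hb | ->]; [left; apply Hf|]; lra.
Qed.

Lemma strictly_decr_on_bounds (f : R -> R) (a b s : R) :
  strictly_decr_on f a b -> a <= s <= b -> f b <= f s <= f a.
Proof.
  intros Hf [Ha Hb]. split.
  - destruct Hb as [Hb | ->]; [left; apply Hf|]; lra.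
  - destruct Ha as [Ha | <-]; [left; apply Hf|]; lra.
Qed.

Lemma constant_of_is_derive_0 (g : R -> R) :
  (forall t, is_derive g t 0) -> forall t, g t = g 0.
Proof.
  intros Hg t. destruct (Rtotal_order t 0) as [Ht|[->|Ht]]; [| reflexivity |].
  - apply (eq_is_derive g); auto.
  - symmetry. apply (eq_is_derive g); auto.
Qed.

(** * Quarter phases *)

Definition same_sign (x y : R) : Prop := (x = 0 <-> y = 0) /\ (0 < x <-> 0 < y).

Lemma same_sign_opp (x y : R) : same_sign x y -> same_sign (- x) (- y).
Proof.
  intros [Hz Hp]. split; split; intro H.
  - assert (x = 0) by lra. assert (y = 0) by tauto. lra.
  - assert (y = 0) by lra. assert (x = 0) by tauto. lra.
  - destruct (Rtotal_order y 0) as [|[Hy|Hy]]; [lra| |]; exfalso.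
    + assert (x = 0) by tauto. lra.
    + assert (0 < x) by tauto. lra.
  - destruct (Rtotal_order x 0) as [|[Hx|Hx]]; [lra| |]; exfalso.
    + assert (y = 0) by tauto. lra.
    + assert (0 < y) by tauto. lra.
Qed.

Lemma same_sign_scale (p q x y : R) :
  0 < p -> 0 < q -> same_sign x y -> same_sign (p * x) (q * y).
Proof.
  intros Hp Hq [Hz Hpos]. split; split; intro H.
  - destruct (Rmult_integral _ _ H); [lra|]. assert (y = 0) by tauto. subst y. ring.
  - destruct (Rmult_integral _ _ H); [lra|]. assert (x = 0) by tauto. subst x. ring.
  - assert (0 < x) by nra. assert (0 < y) by tauto. nra.
  - assert (0 < y) by nra. assert (0 < x) by tauto. nra.
Qed.

Lemma same_sign_Derive (f g : R -> R) :
  (forall t, same_sign (Derive f t) (Derive g t)) ->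
  same_critical_points f g /\ (forall t, Derive f t > 0 <-> Derive g t > 0).
Proof. intros H. split; intro t; apply (H t). Qed.

Definition quarter_phase (h : R -> R) (c T : R) : Prop :=
  (forall x y, x < y -> h x < h y) /\
  forall k : Z, h (c + IZR k * (T / 4)) = IZR k * (PI / 2).

Section QuarterPhase.
Variables (h : R -> R) (c T : R).
Hypothesis Hh : quarter_phase h c T.

Lemma quarter_phase_lt_iff (k : Z) (t : R) :
  h t < IZR k * (PI / 2) <-> t < c + IZR k * (T / 4).
Proof.
  destruct Hh as [Hincr Hval]. rewrite <- Hval. split; intro H; [|auto].
  destruct (Rlt_or_le t (c + IZR k * (T / 4))) as [|Hle]; auto.
  destruct Hle as [Hlt | <-]; [apply Hincr in Hlt|]; lra.
Qed.

Lemma quarter_phase_gt_iff (k : Z) (t : R) :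
  IZR k * (PI / 2) < h t <-> c + IZR k * (T / 4) < t.
Proof.
  destruct Hh as [Hincr Hval]. rewrite <- Hval. split; intro H; [|auto].
  destruct (Rlt_or_le (c + IZR k * (T / 4)) t) as [|Hle]; auto.
  destruct Hle as [Hlt | ->]; [apply Hincr in Hlt|]; lra.
Qed.

Lemma quarter_phase_le_iff (k : Z) (t : R) :
  h t <= IZR k * (PI / 2) <-> t <= c + IZR k * (T / 4).
Proof.
  pose proof (quarter_phase_gt_iff k t) as Hgt.
  split; intros H1; apply Rnot_lt_le; intro H2; apply Hgt in H2; lra.
Qed.

Lemma quarter_phase_ge_iff (k : Z) (t : R) :
  IZR k * (PI / 2) <= h t <-> c + IZR k * (T / 4) <= t.
Proof.
  pose proof (quarter_phase_lt_iff k t) as Hlt.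
  split; intros H1; apply Rnot_lt_le; intro H2; apply Hlt in H2; lra.
Qed.

Lemma quarter_phase_eq_iff (k : Z) (t : R) :
  h t = IZR k * (PI / 2) <-> t = c + IZR k * (T / 4).
Proof.
  pose proof (quarter_phase_le_iff k t) as Hle. pose proof (quarter_phase_ge_iff k t) as Hge.
  split; intro E; apply Rle_antisym; (apply Hle || apply Hge); lra.
Qed.

Lemma quarter_phase_shift (m : Z) :
  quarter_phase (fun t => h t + IZR m * (PI / 2)) (c - IZR m * (T / 4)) T.
Proof.
  destruct Hh as [Hincr Hval]. split.
  - intros x y Hxy. apply Hincr in Hxy. lra.
  - intro k. replace (c - IZR m * (T / 4) + IZR k * (T / 4))
      with (c + IZR (k - m) * (T / 4)) by (rewrite minus_IZR; ring).
    rewrite Hval, minus_IZR. ring.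
Qed.
End QuarterPhase.

Lemma cos_pos_iff (x : R) :
  0 < cos x <-> exists k : Z, IZR (4 * k - 1) * (PI / 2) < x < IZR (4 * k + 1) * (PI / 2).
Proof.
  pose proof PI_RGT_0.
  split.
  - intros Hx. destruct (exists_translate_into_period (2 * PI) (x + PI / 2)) as [m Hm]; [lra|].
    rewrite <- (translate_Z_periodic cos _ periodic_cos m) in Hx.
    exists (- m)%Z. rewrite minus_IZR, plus_IZR, mult_IZR, opp_IZR.
    destruct (Rle_or_lt (PI / 2) (x + IZR m * (2 * PI))).
    { assert (cos (x + IZR m * (2 * PI)) <= 0) by (apply cos_le_0; lra). lra. }
    destruct (Rle_lt_or_eq_dec (- (PI / 2)) (x + IZR m * (2 * PI))) as [|Hy]; [lra | lra |].
    rewrite <- Hy, cos_neg, cos_PI2 in Hx. lra.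
  - intros [k Hk]. rewrite minus_IZR, plus_IZR, mult_IZR in Hk.
    rewrite <- (translate_Z_periodic cos _ periodic_cos (- k)), opp_IZR.
    apply cos_gt_0; lra.
Qed.

Lemma cos_eq_0_iff (x : R) : cos x = 0 <-> exists k : Z, x = IZR (2 * k + 1) * (PI / 2).
Proof.
  split.
  - intros Hx. destruct (cos_eq_0_0 x Hx) as [k Hk]. exists k. rewrite plus_IZR, mult_IZR. lra.
  - intros [k Hk]. apply cos_eq_0_1. exists k. rewrite plus_IZR, mult_IZR in Hk. lra.
Qed.

Lemma cos_add_quarter_turn (x : R) : cos (x + IZR 1 * (PI / 2)) = - sin x.
Proof. rewrite Rmult_1_l, cos_plus, cos_PI2, sin_PI2. ring. Qed.

Lemma cos_sub_quarter_turn (x : R) : cos (x + IZR (-1) * (PI / 2)) = sin x.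
Proof.
  replace (x + IZR (-1) * (PI / 2)) with (x - PI / 2) by (simpl IZR; ring).
  rewrite cos_minus, cos_PI2, sin_PI2. ring.
Qed.

Lemma cos_add_half_turn (x : R) : cos (x + IZR 2 * (PI / 2)) = - cos x.
Proof. replace (x + IZR 2 * (PI / 2)) with (x + PI) by (simpl IZR; field). apply neg_cos. Qed.

Lemma cos_lt_of_descending (k : Z) (x y : R) :
  IZR (4 * k) * (PI / 2) <= x -> x < y -> y <= IZR (4 * k + 2) * (PI / 2) -> cos y < cos x.
Proof.
  rewrite plus_IZR, mult_IZR. intros Hx Hxy Hy.
  rewrite <- (translate_Z_periodic cos _ periodic_cos (- k) x),
          <- (translate_Z_periodic cos _ periodic_cos (- k) y), opp_IZR.
  apply cos_decreasing_1; lra.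
Qed.

Lemma cos_lt_of_ascending (k : Z) (x y : R) :
  IZR (4 * k + 2) * (PI / 2) <= x -> x < y -> y <= IZR (4 * k + 4) * (PI / 2) -> cos x < cos y.
Proof.
  rewrite !plus_IZR, mult_IZR. intros Hx Hxy Hy.
  rewrite <- (translate_Z_periodic cos _ periodic_cos (- k) x),
          <- (translate_Z_periodic cos _ periodic_cos (- k) y), opp_IZR.
  apply cos_increasing_1; lra.
Qed.

Section QuarterPhaseCos.
Variables (h : R -> R) (c T : R).
Hypothesis Hh : quarter_phase h c T.

Lemma cos_phase_incr_stops_at_crest (a b : R) (k : Z) :
  strictly_incr_on (fun t => cos (h t)) a b ->
  a <= c + IZR (4 * k) * (T / 4) -> b <= c + IZR (4 * k) * (T / 4).
Proof.
  intros Hincr Ha. apply Rnot_lt_le. intro Hb.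
  pose proof (Hincr _ b Ha Hb (Rle_refl b)) as Hlt. cbv beta in Hlt.
  rewrite (proj2 Hh), mult_IZR in Hlt.
  replace (4 * IZR k * (PI / 2)) with (0 + IZR k * (2 * PI)) in Hlt by field.
  rewrite (translate_Z_periodic cos _ periodic_cos), cos_0 in Hlt.
  pose proof (COS_bound (h b)). lra.
Qed.

Lemma cos_phase_incr_not_descending (a b : R) (k : Z) :
  strictly_incr_on (fun t => cos (h t)) a b -> a < b ->
  c + IZR (4 * k) * (T / 4) <= a -> c + IZR (4 * k + 2) * (T / 4) <= a.
Proof.
  intros Hincr Hab Ha. apply Rnot_lt_le. intro Ha2.
  set (y := Rmin b (c + IZR (4 * k + 2) * (T / 4))).
  assert (Hay : a < y) by (apply Rmin_glb_lt; lra).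
  assert (Hyb : y <= b) by apply Rmin_l.
  assert (Hy2 : y <= c + IZR (4 * k + 2) * (T / 4)) by apply Rmin_r.
  assert (cos (h a) < cos (h y)) by exact (Hincr a y (Rle_refl a) Hay Hyb).
  assert (cos (h y) < cos (h a)).
  { apply (cos_lt_of_descending k).
    - apply (quarter_phase_ge_iff h c T Hh). exact Ha.
    - apply (proj1 Hh). exact Hay.
    - apply (quarter_phase_le_iff h c T Hh). exact Hy2. }
  lra.
Qed.

Lemma cos_phase_incr_iff (a b : R) :
  0 < T -> a < b ->
  strictly_incr_on (fun t => cos (h t)) a b <->
  exists k : Z, c + IZR (4 * k + 2) * (T / 4) <= a /\ b <= c + IZR (4 * k + 4) * (T / 4).
Proof.
  intros HT Hab. split.
  - intros Hincr. destruct (exists_translate_into_period T (a - c) HT) as [m Hm].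
    exists (- m)%Z. split.
    + apply (cos_phase_incr_not_descending a b); auto.
      rewrite mult_IZR, opp_IZR. lra.
    + replace (4 * - m + 4)%Z with (4 * (- m + 1))%Z by ring.
      apply (cos_phase_incr_stops_at_crest a b); auto.
      rewrite mult_IZR, plus_IZR, opp_IZR. lra.
  - intros [k [Ha Hb]] x y Hx Hxy Hy. apply (cos_lt_of_ascending k).
    + apply (quarter_phase_ge_iff h c T Hh). lra.
    + apply (proj1 Hh). exact Hxy.
    + apply (quarter_phase_le_iff h c T Hh). lra.
Qed.
End QuarterPhaseCos.

Section QuarterPhaseCosSign.
Variables (h1 h2 : R -> R) (c T : R).
Hypotheses (H1 : quarter_phase h1 c T) (H2 : quarter_phase h2 c T).

Lemma quarter_phase_cos_same_sign (t : R) : same_sign (cos (h1 t)) (cos (h2 t)).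
Proof.
  split.
  - rewrite !cos_eq_0_iff. split; intros [k Hk]; exists k.
    + apply (quarter_phase_eq_iff h2 c T H2), (quarter_phase_eq_iff h1 c T H1), Hk.
    + apply (quarter_phase_eq_iff h1 c T H1), (quarter_phase_eq_iff h2 c T H2), Hk.
  - rewrite !cos_pos_iff. split; intros [k [Hlo Hhi]]; exists k.
    + rewrite (quarter_phase_gt_iff h1 c T H1) in Hlo. rewrite (quarter_phase_lt_iff h1 c T H1) in Hhi.
      rewrite (quarter_phase_gt_iff h2 c T H2), (quarter_phase_lt_iff h2 c T H2). auto.
    + rewrite (quarter_phase_gt_iff h2 c T H2) in Hlo. rewrite (quarter_phase_lt_iff h2 c T H2) in Hhi.
      rewrite (quarter_phase_gt_iff h1 c T H1), (quarter_phase_lt_iff h1 c T H1). auto.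
Qed.
End QuarterPhaseCosSign.

Lemma strictly_incr_on_ext (f g : R -> R) (a b : R) :
  (forall t, f t = g t) -> strictly_incr_on f a b <-> strictly_incr_on g a b.
Proof.
  intros E. split; intros H x y Hx Hxy Hy; pose proof (H x y Hx Hxy Hy); rewrite ?E in *; lra.
Qed.

Lemma strictly_decr_on_iff_incr_opp (f g : R -> R) (a b : R) :
  (forall t, g t = - f t) -> strictly_decr_on f a b <-> strictly_incr_on g a b.
Proof.
  intros E. split; intros H x y Hx Hxy Hy; pose proof (H x y Hx Hxy Hy); rewrite ?E in *; lra.
Qed.

Section QuarterPhaseTransfer.
Variables (h1 h2 : R -> R) (c T : R).
Hypotheses (HT : 0 < T) (H1 : quarter_phase h1 c T) (H2 : quarter_phase h2 c T).

Lemma quarter_phase_sin_same_sign (t : R) : same_sign (sin (h1 t)) (sin (h2 t)).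
Proof.
  rewrite <- !cos_sub_quarter_turn.
  exact (quarter_phase_cos_same_sign _ _ _ T
           (quarter_phase_shift h1 c T H1 (-1)) (quarter_phase_shift h2 c T H2 (-1)) t).
Qed.

Lemma quarter_phase_cos_incr_iff (m : Z) (a b : R) : a < b ->
  strictly_incr_on (fun t => cos (h1 t + IZR m * (PI / 2))) a b <->
  strictly_incr_on (fun t => cos (h2 t + IZR m * (PI / 2))) a b.
Proof.
  intros Hab.
  rewrite (cos_phase_incr_iff _ _ T (quarter_phase_shift h1 c T H1 m) a b HT Hab),
          (cos_phase_incr_iff _ _ T (quarter_phase_shift h2 c T H2 m) a b HT Hab).
  reflexivity.
Qed.

Lemma quarter_phase_cos_same_monotonicity :
  same_monotonicity (fun t => cos (h1 t)) (fun t => cos (h2 t)).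
Proof.
  intros a b Hab. split.
  - rewrite (cos_phase_incr_iff h1 c T H1 a b HT Hab), (cos_phase_incr_iff h2 c T H2 a b HT Hab).
    reflexivity.
  - rewrite (strictly_decr_on_iff_incr_opp _ (fun t => cos (h1 t + IZR 2 * (PI / 2)))),
            (strictly_decr_on_iff_incr_opp _ (fun t => cos (h2 t + IZR 2 * (PI / 2))))
      by (intro; apply cos_add_half_turn).
    exact (quarter_phase_cos_incr_iff 2 a b Hab).
Qed.

Lemma quarter_phase_sin_same_monotonicity :
  same_monotonicity (fun t => sin (h1 t)) (fun t => sin (h2 t)).
Proof.
  intros a b Hab. split.
  - rewrite (strictly_incr_on_ext _ (fun t => cos (h1 t + IZR (-1) * (PI / 2)))),
            (strictly_incr_on_ext (fun t => sin (h2 t)) (fun t => cos (h2 t + IZR (-1) * (PI / 2))))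
      by (intro; symmetry; apply cos_sub_quarter_turn).
    exact (quarter_phase_cos_incr_iff (-1) a b Hab).
  - rewrite (strictly_decr_on_iff_incr_opp _ (fun t => cos (h1 t + IZR 1 * (PI / 2)))),
            (strictly_decr_on_iff_incr_opp _ (fun t => cos (h2 t + IZR 1 * (PI / 2))))
      by (intro; apply cos_add_quarter_turn).
    exact (quarter_phase_cos_incr_iff 1 a b Hab).
Qed.
End QuarterPhaseTransfer.

Lemma quarter_phase_linear (T : R) : 0 < T -> quarter_phase (fun t => 2 * PI / T * t) 0 T.
Proof.
  intros HT. pose proof PI_RGT_0. split.
  - intros x y Hxy. apply Rmult_lt_compat_l; [apply Rdiv_lt_0_compat|]; lra.
  - intro k. field. lra.
Qed.

(** * The Carlotto-Schulz solution *)

Definition alpha_rhs (n : nat) (r th al : R) : R :=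
  (2 * INR n - 2) * / sin r * cos al * cot (2 * th) - (2 * INR n - 1) * cot r * sin al.

Section CarlottoSchulzSolution.
Variables (n : nat) (T r0 : R) (ro tho alo : R -> R).
Hypotheses (Hn : (1 < n)%nat) (HT : 0 < T) (Hr0 : 0 < r0 < PI)
  (Hsys : solves_system n ro tho alo).
Hypotheses (Htho0 : tho 0 = PI / 4) (Hro0 : ro 0 = r0) (Halo0 : alo 0 = - (PI / 2))
  (HthoT4 : tho (T / 4) > 0) (HroT4 : ro (T / 4) = PI / 2) (HaloT4 : alo (T / 4) = 0).
Hypotheses (Htho_decr : strictly_decr_on tho 0 (T / 4))
  (Hro_incr : strictly_incr_on ro 0 (T / 4)) (Halo_incr : strictly_incr_on alo 0 (T / 4)).
Hypotheses (Htho_sym1 : sym_about tho (T / 4)) (Htho_sym3 : sym_about tho (3 * T / 4))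
  (Htho_psym2 : psym_about tho (T / 2) (PI / 4)) (Htho_psym0 : psym_about tho 0 (PI / 4))
  (Hro_sym0 : sym_about ro 0) (Hro_sym2 : sym_about ro (T / 2))
  (Hro_psym1 : psym_about ro (T / 4) (PI / 2)) (Hro_psym3 : psym_about ro (3 * T / 4) (PI / 2))
  (Htho_per : periodic tho T) (Hro_per : periodic ro T)
  (Halo_per : forall t, alo (t + T) = alo t + 2 * PI).

Let speed (t : R) : R := alpha_rhs n (ro t) (tho t) (alo t).

Lemma is_derive_ro (t : R) : is_derive ro t (cos (alo t)).
Proof. apply Hsys. Qed.

Lemma is_derive_tho (t : R) : is_derive tho t (sin (alo t) / sin (ro t)).
Proof. apply Hsys. Qed.

Lemma is_derive_alo (t : R) : is_derive alo t (speed t).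
Proof. apply Hsys. Qed.

Lemma r0_lt_PI2 : r0 < PI / 2.
Proof. rewrite <- Hro0, <- HroT4. apply Hro_incr; lra. Qed.

Lemma ro_bounds (t : R) : r0 <= ro t <= PI - r0.
Proof.
  pose proof r0_lt_PI2.
  (* [(ro - pi/2)^2] is symmetric about [0] and about [T/4]. *)
  assert (Hsq : (ro t - PI / 2) ^ 2 <= (PI / 2 - r0) ^ 2).
  { apply (forall_of_sym_about (fun x => x <= (PI / 2 - r0) ^ 2) (fun t => (ro t - PI / 2) ^ 2) (T / 4)).
    - lra.
    - exact (sym_about_comp ro (fun x => (x - PI / 2) ^ 2) 0 Hro_sym0).
    - exact (sym_about_sq_dev_of_psym_about ro _ _ Hro_psym1).
    - intros s Hs. pose proof (strictly_incr_on_bounds ro 0 (T / 4) s Hro_incr Hs). nra. }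
  nra.
Qed.

Lemma sin_ro_pos (t : R) : 0 < sin (ro t).
Proof. pose proof (ro_bounds t). apply sin_gt_0; lra. Qed.

Lemma cos_alo_periodic : periodic (fun t => cos (alo t)) T.
Proof. intro t. cbv beta. rewrite Halo_per. apply periodic_cos. Qed.

Lemma sin_alo_periodic : periodic (fun t => sin (alo t)) T.
Proof. intro t. cbv beta. rewrite Halo_per. apply periodic_sin. Qed.

Lemma sin_alo_eq (t : R) : sin (alo t) / sin (ro t) * sin (ro t) = sin (alo t).
Proof. pose proof (sin_ro_pos t). field. lra. Qed.

Lemma sin_alo_sym_about (a c : R) :
  psym_about tho a c -> sym_about ro a -> sym_about (fun t => sin (alo t)) a.
Proof.
  intros Htho Hro. apply (sym_about_ext _ _ _ sin_alo_eq).
  apply sym_about_mul.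
  - exact (sym_about_derive_of_psym_about _ _ _ _ is_derive_tho Htho).
  - exact (sym_about_comp _ _ _ Hro).
Qed.

Lemma sin_alo_psym_about (a : R) :
  sym_about tho a -> psym_about ro a (PI / 2) -> psym_about (fun t => sin (alo t)) a 0.
Proof.
  intros Htho Hro. apply (psym_about_ext _ _ _ _ sin_alo_eq).
  apply psym_about_mul.
  - exact (psym_about_derive_of_sym_about _ _ _ is_derive_tho Htho).
  - exact (sym_about_sin_of_psym_about _ _ Hro).
Qed.

Lemma cos_ro_antisym_about (a : R) :
  psym_about ro a (PI / 2) -> forall t, cos (ro (a + t)) = - cos (ro (a - t)).
Proof.
  intros Hro t. replace (ro (a + t)) with (PI - ro (a - t)) by (pose proof (Hro t); lra).
  apply Rtrigo_facts.cos_pi_minus.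
Qed.

Lemma speed_sym_about_T4 : sym_about speed (T / 4).
Proof.
  intro t. unfold speed, alpha_rhs, cot.
  pose proof (sym_about_sin_of_psym_about ro _ Hro_psym1 t) as Hsr.
  pose proof (cos_ro_antisym_about _ Hro_psym1 t) as Hcr.
  pose proof (sym_about_derive_of_psym_about ro _ _ _ is_derive_ro Hro_psym1 t) as Hca.
  pose proof (sin_alo_psym_about _ Htho_sym1 Hro_psym1 t) as Hsa.
  cbv beta in Hsr, Hca, Hsa.
  rewrite Hsr, Hcr, Hca, (Htho_sym1 t).
  replace (sin (alo (T / 4 + t))) with (- sin (alo (T / 4 - t))) by lra.
  unfold Rdiv. ring.
Qed.

Lemma speed_sym_about_0 : sym_about speed 0.
Proof.
  intro t. unfold speed, alpha_rhs, cot.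
  pose proof (psym_about_derive_of_sym_about ro _ _ is_derive_ro Hro_sym0 t) as Hca.
  pose proof (sin_alo_sym_about _ _ Htho_psym0 Hro_sym0 t) as Hsa.
  cbv beta in Hca, Hsa.
  replace (2 * tho (0 + t)) with (PI - 2 * tho (0 - t)) by (pose proof (Htho_psym0 t); lra).
  rewrite (Hro_sym0 t), Hsa, sin_PI_x, Rtrigo_facts.cos_pi_minus.
  replace (cos (alo (0 + t))) with (- cos (alo (0 - t))) by lra.
  unfold Rdiv. ring.
Qed.

Lemma speed_pos_first_quarter (s : R) : 0 <= s <= T / 4 -> 0 < speed s.
Proof.
  intros Hs. pose proof PI_RGT_0.
  assert (HnR : 2 <= INR n) by (apply (le_INR 2); lia).
  pose proof (strictly_incr_on_bounds alo _ _ s Halo_incr Hs) as Ba.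
  pose proof (strictly_decr_on_bounds tho _ _ s Htho_decr Hs) as Bt.
  pose proof (strictly_incr_on_bounds ro _ _ s Hro_incr Hs) as Br.
  rewrite Halo0, HaloT4 in Ba. rewrite Htho0 in Bt. rewrite Hro0, HroT4 in Br.
  pose proof (sin_ro_pos s) as Hsr. pose proof r0_lt_PI2.
  assert (Hcot2 : 0 <= cot (2 * tho s)).
  { unfold cot. apply Rmult_le_pos.
    - apply cos_ge_0; lra.
    - left. apply Rinv_0_lt_compat, sin_gt_0; lra. }
  unfold speed, alpha_rhs. destruct (proj2 Hs) as [Hlt | ->].
  - assert (Ha : alo s < 0) by (rewrite <- HaloT4; apply Halo_incr; lra).
    assert (Hr : ro s < PI / 2) by (rewrite <- HroT4; apply Hro_incr; lra).
    assert (P1 : 0 <= (2 * INR n - 2) * / sin (ro s) * cos (alo s) * cot (2 * tho s)).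
    { apply Rmult_le_pos; [|exact Hcot2].
      apply Rmult_le_pos; [|apply cos_ge_0; lra].
      apply Rmult_le_pos; [lra|]. left. apply Rinv_0_lt_compat. exact Hsr. }
    assert (P2 : 0 < (2 * INR n - 1) * cot (ro s)).
    { unfold cot. apply Rmult_lt_0_compat; [lra|].
      apply Rdiv_lt_0_compat; [apply cos_gt_0|]; lra. }
    assert (P3 : sin (alo s) < 0) by (apply sin_lt_0_var; lra).
    nra.
  - rewrite HaloT4, HroT4, cos_0, sin_0, sin_PI2, Rinv_1.
    assert (tho (T / 4) < PI / 4) by (rewrite <- Htho0; apply Htho_decr; lra).
    assert (0 < cot (2 * tho (T / 4))).
    { unfold cot. apply Rdiv_lt_0_compat; [apply cos_gt_0 | apply sin_gt_0]; lra. }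
    nra.
Qed.

Lemma speed_pos (t : R) : 0 < speed t.
Proof.
  apply (forall_of_sym_about (fun x => 0 < x) speed (T / 4)); [lra | exact speed_sym_about_0 |
    exact speed_sym_about_T4 | exact speed_pos_first_quarter].
Qed.

Lemma alo_incr (x y : R) : x < y -> alo x < alo y.
Proof.
  intros Hxy. apply (incr_function_le alo m_infty p_infty speed); simpl; auto.
  - intros. apply is_derive_alo.
  - intros. apply speed_pos.
Qed.

Lemma alo_add_half_period (t : R) : alo (t + T / 2) = alo t + PI.
Proof.
  assert (Hper : periodic speed (T / 2)).
  { replace (T / 2) with (2 * (T / 4 - 0)) by field.
    exact (periodic_of_sym_about speed 0 (T / 4) speed_sym_about_0 speed_sym_about_T4). }
  assert (Hconst : forall u, alo (u + T / 2) - alo u = alo (0 + T / 2) - alo 0).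
  { apply (constant_of_is_derive_0 (fun u => alo (u + T / 2) - alo u)). intro u.
    assert (E : is_derive (fun u => alo (u + T / 2) - alo u) u (speed (u + T / 2) - speed u)).
    { apply (is_derive_minus (fun u => alo (u + T / 2))).
      - apply is_derive_shift, is_derive_alo.
      - apply is_derive_alo. }
    rewrite Hper, Rminus_eq_0 in E. exact E. }
  pose proof (Hconst (0 + T / 2)) as Hsecond.
  replace (0 + T / 2 + T / 2) with (0 + T) in Hsecond by field.
  rewrite Halo_per in Hsecond. pose proof (Hconst t). lra.
Qed.

Lemma quarter_phase_alo : quarter_phase (fun t => alo (t + T / 4)) 0 T.
Proof.
  split.
  - intros x y Hxy. apply alo_incr. lra.
  - intro k. destruct (Z.Even_or_Odd k) as [[m ->] | [m ->]].
    + replace (0 + IZR (2 * m) * (T / 4) + T / 4) with (T / 4 + IZR m * (T / 2))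
        by (rewrite mult_IZR; field).
      rewrite (translate_Z_additive alo _ _ alo_add_half_period), HaloT4, mult_IZR. field.
    + replace (0 + IZR (2 * m + 1) * (T / 4) + T / 4) with (0 + T / 2 + IZR m * (T / 2))
        by (rewrite plus_IZR, mult_IZR; field).
      rewrite (translate_Z_additive alo _ _ alo_add_half_period), alo_add_half_period, Halo0,
        plus_IZR, mult_IZR.
      field.
Qed.

Lemma theta_part :
  let th := fun t => tho (t + T / 4) in
  let f_th := fun t => PI / 4 - (PI / 4 - th 0) * cos (2 * PI / T * t) in
  theta_syms th T /\ theta_syms f_th T /\
  same_critical_points th f_th /\ (forall t, Derive th t > 0 <-> Derive f_th t > 0).
Proof.
  intros th f_th. pose proof PI_RGT_0.
  assert (Hth0 : th 0 < PI / 4).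
  { unfold th. rewrite Rplus_0_l, <- Htho0. apply Htho_decr; lra. }
  split; [|split; [|apply same_sign_Derive; intro t]].
  - repeat split.
    + exact (periodic_shift tho _ _ Htho_per).
    + apply (sym_about_shift tho _ _ (T / 4)); [ring | exact Htho_sym1].
    + apply (sym_about_shift tho _ _ (3 * T / 4)); [field | exact Htho_sym3].
    + apply (psym_about_shift tho _ _ (T / 2)); [field | exact Htho_psym2].
    + apply (psym_about_shift tho _ _ (0 + T)); [field |].
      exact (psym_about_add_period tho _ _ _ Htho_per Htho_psym0).
  - apply (theta_syms_of_cos_syms f_th (fun t => cos (2 * PI / T * t)) T (- (PI / 4 - th 0))); [intro; unfold f_th; ring|].
    exact (cos_syms_scaled T HT).
  - assert (Dth : Derive th t = / sin (ro (t + T / 4)) * sin (alo (t + T / 4))).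
    { apply is_derive_unique. replace (/ sin (ro (t + T / 4)) * sin (alo (t + T / 4)))
        with (sin (alo (t + T / 4)) / sin (ro (t + T / 4))) by (unfold Rdiv; ring).
      apply is_derive_shift, is_derive_tho. }
    assert (Df : Derive f_th t = (PI / 4 - th 0) * (2 * PI / T) * sin (2 * PI / T * t)).
    { apply is_derive_unique. unfold f_th. auto_derive; auto. field. lra. }
    rewrite Dth, Df. apply same_sign_scale.
    + apply Rinv_0_lt_compat, sin_ro_pos.
    + apply Rmult_lt_0_compat; [lra | apply Rdiv_lt_0_compat; lra].
    + exact (quarter_phase_sin_same_sign _ _ 0 T quarter_phase_alo (quarter_phase_linear T HT) t).
Qed.

Lemma r_part :
  let r := fun t => ro (t + T / 4) in
  let f_r := fun t => PI / 2 + (PI / 2 - r0) * sin (2 * PI / T * t) in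
  r_syms r T /\ r_syms f_r T /\
  same_critical_points r f_r /\ (forall t, Derive r t > 0 <-> Derive f_r t > 0).
Proof.
  intros r f_r. pose proof PI_RGT_0. pose proof r0_lt_PI2.
  split; [|split; [|apply same_sign_Derive; intro t]].
  - repeat split.
    + exact (periodic_shift ro _ _ Hro_per).
    + apply (sym_about_shift ro _ _ (T / 2)); [field | exact Hro_sym2].
    + apply (sym_about_shift ro _ _ (0 + T)); [field |].
      exact (sym_about_add_period ro _ _ Hro_per Hro_sym0).
    + apply (psym_about_shift ro _ _ (T / 4)); [ring | exact Hro_psym1].
    + apply (psym_about_shift ro _ _ (3 * T / 4)); [field | exact Hro_psym3].
  - apply (r_syms_of_sin_syms f_r (fun t => sin (2 * PI / T * t)) T (PI / 2 - r0));
      [reflexivity | exact (sin_syms_scaled T HT)].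
  - assert (Dr : Derive r t = 1 * cos (alo (t + T / 4))).
    { apply is_derive_unique. rewrite Rmult_1_l. apply is_derive_shift, is_derive_ro. }
    assert (Df : Derive f_r t = (PI / 2 - r0) * (2 * PI / T) * cos (2 * PI / T * t)).
    { apply is_derive_unique. unfold f_r. auto_derive; auto. field. lra. }
    rewrite Dr, Df. apply same_sign_scale.
    + lra.
    + apply Rmult_lt_0_compat; [lra | apply Rdiv_lt_0_compat; lra].
    + exact (quarter_phase_cos_same_sign _ _ 0 T quarter_phase_alo (quarter_phase_linear T HT) t).
Qed.

Lemma Derive_cos_alo_shift (t : R) :
  Derive (fun t => cos (alo (t + T / 4))) t = speed (t + T / 4) * - sin (alo (t + T / 4)).
Proof.
  apply is_derive_unique.
  apply (is_derive_comp cos (fun u => alo (u + T / 4))).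
  - auto_derive; auto. ring.
  - apply is_derive_shift, is_derive_alo.
Qed.

Lemma Derive_sin_alo_shift (t : R) :
  Derive (fun t => sin (alo (t + T / 4))) t = speed (t + T / 4) * cos (alo (t + T / 4)).
Proof.
  apply is_derive_unique.
  apply (is_derive_comp sin (fun u => alo (u + T / 4))).
  - auto_derive; auto. ring.
  - apply is_derive_shift, is_derive_alo.
Qed.

Lemma cos_alpha_part :
  let al := fun t => alo (t + T / 4) in
  cos_syms (fun t => cos (al t)) T /\ cos_syms (fun t => cos (2 * PI / T * t)) T /\
  same_critical_points (fun t => cos (al t)) (fun t => cos (2 * PI / T * t)) /\
  same_monotonicity (fun t => cos (al t)) (fun t => cos (2 * PI / T * t)).
Proof.
  cbv zeta beta. pose proof PI_RGT_0.
  split; [|split; [exact (cos_syms_scaled T HT) | split]].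
  - repeat split.
    + exact (periodic_shift _ _ _ cos_alo_periodic).
    + apply (sym_about_shift (fun t => cos (alo t)) (T / 4) _ (T / 4)); [ring|].
      exact (sym_about_derive_of_psym_about ro _ _ _ is_derive_ro Hro_psym1).
    + apply (sym_about_shift (fun t => cos (alo t)) (T / 4) _ (3 * T / 4)); [field|].
      exact (sym_about_derive_of_psym_about ro _ _ _ is_derive_ro Hro_psym3).
    + apply (psym_about_shift (fun t => cos (alo t)) (T / 4) _ (T / 2)); [field|].
      exact (psym_about_derive_of_sym_about ro _ _ is_derive_ro Hro_sym2).
    + apply (psym_about_shift (fun t => cos (alo t)) (T / 4) _ (0 + T)); [field|].
      apply (psym_about_add_period _ _ _ _ cos_alo_periodic).
      exact (psym_about_derive_of_sym_about ro _ _ is_derive_ro Hro_sym0).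
  - apply same_sign_Derive. intro t.
    assert (Dw : Derive (fun t => cos (2 * PI / T * t)) t = 2 * PI / T * - sin (2 * PI / T * t)).
    { apply is_derive_unique. auto_derive; auto. ring. }
    rewrite Derive_cos_alo_shift, Dw. apply same_sign_scale.
    + apply speed_pos.
    + apply Rdiv_lt_0_compat; lra.
    + apply same_sign_opp.
      exact (quarter_phase_sin_same_sign _ _ 0 T quarter_phase_alo (quarter_phase_linear T HT) t).
  - exact (quarter_phase_cos_same_monotonicity _ _ 0 T HT quarter_phase_alo (quarter_phase_linear T HT)).
Qed.

Lemma sin_alpha_part :
  let al := fun t => alo (t + T / 4) in
  sin_syms (fun t => sin (al t)) T /\ sin_syms (fun t => sin (2 * PI / T * t)) T /\
  same_critical_points (fun t => sin (al t)) (fun t => sin (2 * PI / T * t)) /\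
  same_monotonicity (fun t => sin (al t)) (fun t => sin (2 * PI / T * t)).
Proof.
  cbv zeta beta. pose proof PI_RGT_0.
  split; [|split; [exact (sin_syms_scaled T HT) | split]].
  - repeat split.
    + exact (periodic_shift _ _ _ sin_alo_periodic).
    + apply (sym_about_shift (fun t => sin (alo t)) (T / 4) _ (T / 2)); [field|].
      exact (sin_alo_sym_about _ _ Htho_psym2 Hro_sym2).
    + apply (sym_about_shift (fun t => sin (alo t)) (T / 4) _ (0 + T)); [field|].
      apply (sym_about_add_period _ _ _ sin_alo_periodic).
      exact (sin_alo_sym_about _ _ Htho_psym0 Hro_sym0).
    + apply (psym_about_shift (fun t => sin (alo t)) (T / 4) _ (T / 4)); [ring|].
      exact (sin_alo_psym_about _ Htho_sym1 Hro_psym1).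
    + apply (psym_about_shift (fun t => sin (alo t)) (T / 4) _ (3 * T / 4)); [field|].
      exact (sin_alo_psym_about _ Htho_sym3 Hro_psym3).
  - apply same_sign_Derive. intro t.
    assert (Dw : Derive (fun t => sin (2 * PI / T * t)) t = 2 * PI / T * cos (2 * PI / T * t)).
    { apply is_derive_unique. auto_derive; auto. ring. }
    rewrite Derive_sin_alo_shift, Dw. apply same_sign_scale.
    + apply speed_pos.
    + apply Rdiv_lt_0_compat; lra.
    + exact (quarter_phase_cos_same_sign _ _ 0 T quarter_phase_alo (quarter_phase_linear T HT) t).
  - exact (quarter_phase_sin_same_monotonicity _ _ 0 T HT quarter_phase_alo (quarter_phase_linear T HT)).
Qed.
End CarlottoSchulzSolution.

Theorem mainTheorem3 (n : nat) (T r0 : R) (ro tho alo : R -> R) :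
  (1 < n)%nat ->
  0 < T -> 0 < r0 < PI ->
  solves_system n ro tho alo ->
  tho 0 = PI / 4 -> ro 0 = r0 -> alo 0 = - (PI / 2) ->
  tho (T / 4) > 0 -> ro (T / 4) = PI / 2 -> alo (T / 4) = 0 ->
  strictly_decr_on tho 0 (T / 4) ->
  strictly_incr_on ro 0 (T / 4) ->
  strictly_incr_on alo 0 (T / 4) ->
  sym_about tho (T / 4) -> sym_about tho (3 * T / 4) ->
  psym_about tho (T / 2) (PI / 4) -> psym_about tho 0 (PI / 4) ->
  sym_about ro 0 -> sym_about ro (T / 2) ->
  psym_about ro (T / 4) (PI / 2) -> psym_about ro (3 * T / 4) (PI / 2) ->
  periodic tho T -> periodic ro T ->
  (forall t, alo (t + T) = alo t + 2 * PI) ->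
  let r := fun t => ro (t + T / 4) in
  let th := fun t => tho (t + T / 4) in
  let al := fun t => alo (t + T / 4) in
  let th0 := th 0 in
  let f_th := fun t => PI / 4 - (PI / 4 - th0) * cos (2 * PI / T * t) in
  let f_r := fun t => PI / 2 + (PI / 2 - r0) * sin (2 * PI / T * t) in
  (* (i) *)
  (theta_syms th T /\ theta_syms f_th T /\
   same_critical_points th f_th /\
   (forall t, Derive th t > 0 <-> Derive f_th t > 0)) /\
  (* (ii) *)
  (r_syms r T /\ r_syms f_r T /\
   same_critical_points r f_r /\
   (forall t, Derive r t > 0 <-> Derive f_r t > 0)) /\
  (* (iii) *)
  (cos_syms (fun t => cos (al t)) T /\
   cos_syms (fun t => cos (2 * PI / T * t)) T /\
   same_critical_points (fun t => cos (al t)) (fun t => cos (2 * PI / T * t)) /\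
   same_monotonicity (fun t => cos (al t)) (fun t => cos (2 * PI / T * t))) /\
  (* (iv) *)
  (sin_syms (fun t => sin (al t)) T /\
   sin_syms (fun t => sin (2 * PI / T * t)) T /\
   same_critical_points (fun t => sin (al t)) (fun t => sin (2 * PI / T * t)) /\
   same_monotonicity (fun t => sin (al t)) (fun t => sin (2 * PI / T * t))).
Proof.
  intros.
  split; [|split; [|split]];
    [eapply theta_part | eapply r_part | eapply cos_alpha_part | eapply sin_alpha_part];
    eassumption.
Qed.
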